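(* Let $A$ be an irreducible $\{0,1\}$-matrix which is not a permutation matrix, and let $\mathcal{C}$ be a right Markov code for $(X_A,\sigma_A)$. Then the one-sided topological Markov shift $(X_{A(\mathcal{C})},\sigma_{A(\mathcal{C})})$ is continuously orbit equivalent to $(X_A,\sigma_A)$.
   Context: For an $N\times N$ matrix $A=[A(i,j)]_{i,j=1}^N$ with entries in $\{0,1\}$, put $\Sigma_A=\{1,\dots,N\}$ and let $X_A$ be the set of sequences $(x_n)_{n\in\mathbb{N}}$ in $\Sigma_A$ with $A(x_n,x_{n+1})=1$ for all $n$, with the product topology and the shift $\sigma_A((x_n)_n)=(x_{n+1})_n$. $B_k(X_A)$ is the set of admissible words of length $k$, $B_0(X_A)$ the empty word, $B_*(X_A)=\bigcup_{k\ge0}B_k(X_A)$. For a word $w=w_1\cdots w_\ell$ put $\sigma_A(w)=w_2\cdots w_\ell$. A code is a nonempty $\mathcal{C}\subset B_*(X_A)$ such that any equality $\omega(i_1)\cdots\omega(i_k)=\omega(j_1)\cdots\omega(j_n)$ of concatenations of words of $\mathcal{C}$ forces $n=k$ and $\omega(i_m)=\omega(j_m)$ for all $m$; a prefix code is a code in which no word is a prefix of another. A finite prefix code $\mathcal{C}=\{\omega(1),\dots,\omega(M)\}\subset B_*(X_A)$, $\Sigma_{A(\mathcal{C})}=\{1,\dots,M\}$, is a right Markov code for $(X_A,\sigma_A)$ if: (i) for every $\gamma\in B_*(X_A)$ there is $\eta\in B_*(X_A)$ with $\gamma\eta\in B_*(X_A)$ and a unique finite sequence $(i_1,\dots,i_k)$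 in $\Sigma_{A(\mathcal{C})}$ with $\gamma\eta=\omega(i_1)\cdots\omega(i_k)$; (ii) there is $L\in\mathbb{N}$ such that for all $i_1,\dots,i_L\in\Sigma_{A(\mathcal{C})}$ with $\omega(i_1)\cdots\omega(i_L)\in B_*(X_A)$ there exist $j_1,\dots,j_k\in\Sigma_{A(\mathcal{C})}$ with $\sigma_A(\omega(i_1))\omega(i_2)\cdots\omega(i_L)=\omega(j_1)\cdots\omega(j_k)$; (iii) for every $i,j$ there are $n_1,\dots,n_l\in\Sigma_{A(\mathcal{C})}$ with $\omega(i)\omega(n_1)\cdots\omega(n_l)\omega(j)\in B_*(X_A)$. $A(\mathcal{C})$ is the $M\times M$ matrix with $A(\mathcal{C})(i,j)=A(r(\omega(i)),s(\omega(j)))$, where $s(\omega(i)),r(\omega(i))$ denote the first and last symbols of $\omega(i)$. $(X_A,\sigma_A)$ and $(X_B,\sigma_B)$ are continuously orbit equivalent if there exist a homeomorphism $h:X_A\to X_B$ and continuous maps $k_1,l_1:X_A\to\mathbb{Z}_+$, $k_2,l_2:X_B\to\mathbb{Z}_+$ with $\sigma_B^{k_1(x)}(h(\sigma_A(x)))=\sigma_B^{l_1(x)}(h(x))$ for $x\in X_A$ and $\sigma_A^{k_2(y)}(h^{-1}(\sigma_B(y)))=\sigma_A^{l_2(y)}(h^{-1}(y))$ for $y\in X_B$. *)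

From HB Require Import structures.
From mathcomp Require Import all_boot all_order all_algebra.
From mathcomp Require Import all_classical all_reals.
From mathcomp Require Import topology_structure discrete_topology nat_topology
  function_spaces subspace_topology.
Set Implicit Arguments. Unset Strict Implicit. Unset Printing Implicit Defensive.
Import GRing.Theory Num.Theory.
Local Open Scope classical_set_scope.
Local Open Scope ring_scope.

Definition zero_one_mx (N : nat) (A : 'M[int]_N) : Prop :=
  forall i j, A i j = 0 \/ A i j = 1.

Definition irreducible_mx (N : nat) (A : 'M[int]_N) : Prop :=
  forall i j : 'I_N, exists n : nat, (0 < n)%N /\ 0 < (A ^+ n) i j.

Notation alph N := (discrete_topology (ordinal N)).
Notation seqsp N := {ptws nat -> alph N}.

Definition X_ (N : nat) (A : 'M[int]_N) : set (seqsp N) :=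
  [set x | forall n : nat, A (x n) (x n.+1) = 1].

Definition shift (N : nat) (x : seqsp N) : seqsp N := fun n => x n.+1.
Definition shiftn (N : nat) (k : nat) (x : seqsp N) : seqsp N :=
  fun n => x (n + k)%N.

(* Admissible words B_*(X_A): the empty word, and the words that occur
   (as initial blocks, X_A being shift invariant) in points of X_A. *)
Definition admissible (N : nat) (A : 'M[int]_N) (w : seq 'I_N) : Prop :=
  w = [::] \/ exists x, X_ A x /\ w = mkseq (fun n => (x n : 'I_N)) (size w).

Definition concat (N M : nat) (omega : 'I_M -> seq 'I_N) (s : seq 'I_M)
  : seq 'I_N := flatten (map omega s).

Definition wshift (N : nat) (w : seq 'I_N) : seq 'I_N := behead w.

Definition is_code (N M : nat) (A : 'M[int]_N) (omega : 'I_M -> seq 'I_N)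
  : Prop :=
  [/\ (0 < M)%N, injective omega,
      (forall i, admissible A (omega i)) &
      (forall s t : seq 'I_M, concat omega s = concat omega t ->
          map omega s = map omega t)].

Definition is_prefix_code (N M : nat) (A : 'M[int]_N)
  (omega : 'I_M -> seq 'I_N) : Prop :=
  is_code A omega /\
  (forall i j : 'I_M, i != j -> ~~ prefix (omega i) (omega j)).

Definition right_Markov_code (N M : nat) (A : 'M[int]_N)
  (omega : 'I_M -> seq 'I_N) : Prop :=
  [/\ is_prefix_code A omega,
   (* (i) *)
   (forall gamma, admissible A gamma ->
      exists eta, admissible A eta /\ admissible A (gamma ++ eta) /\
        exists s : seq 'I_M, gamma ++ eta = concat omega s /\
          forall t : seq 'I_M, gamma ++ eta = concat omega t -> t = s),
   (* (ii) *)
   (exists L : nat, (0 < L)%N /\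
      forall s : seq 'I_M, size s = L -> admissible A (concat omega s) ->
        exists t : seq 'I_M,
          wshift (concat omega s) = concat omega t) &
   (* (iii) *)
   (forall i j : 'I_M, exists ns : seq 'I_M,
      admissible A (omega i ++ concat omega ns ++ omega j))].

(* A(C)(i,j) = A(r(omega(i)), s(omega(j))), r = last symbol, s = first
   symbol (code words are nonempty; the value 0 for empty words is
   irrelevant). *)
Definition code_mx (N M : nat) (A : 'M[int]_N) (omega : 'I_M -> seq 'I_N)
  : 'M[int]_M :=
  \matrix_(i, j)
    match omega i, omega j with
    | a :: r, b :: _ => A (last a r) b
    | _, _ => 0
    end.

Definition coe (N M : nat) (A : 'M[int]_N) (B : 'M[int]_M) : Prop :=
  exists (h : seqsp N -> seqsp M) (g : seqsp M -> seqsp N)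
         (k1 l1 : seqsp N -> nat) (k2 l2 : seqsp M -> nat),
    [/\ (forall x, X_ A x -> X_ B (h x)) /\ (forall y, X_ B y -> X_ A (g y)),
        (forall x, X_ A x -> g (h x) = x) /\ (forall y, X_ B y -> h (g y) = y),
        {within X_ A, continuous h} /\ {within X_ B, continuous g},
        ({within X_ A, continuous k1} /\ {within X_ A, continuous l1}) /\
        ({within X_ B, continuous k2} /\ {within X_ B, continuous l2}) &
        (forall x, X_ A x ->
           shiftn (k1 x) (h (shift x)) = shiftn (l1 x) (h x)) /\
        (forall y, X_ B y ->
           shiftn (k2 y) (g (shift y)) = shiftn (l2 y) (g y))].

From mathcomp Require Import all_boot all_order all_algebra.
From mathcomp Require Import all_classical all_reals.
From mathcomp Require Import topology_structure discrete_topology nat_topology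
  function_spaces subspace_topology.
From mathcomp Require Import zify.
Set Implicit Arguments. Unset Strict Implicit. Unset Printing Implicit Defensive.

(* The map h sends a path (i_k) of A(C) to the concatenation
   omega(i_0) omega(i_1) ..., a point of X_A.  Its inverse g parses a point of
   X_A greedily into code words: this is well defined because C is a prefix
   code, and always succeeds because by (i) every admissible word is a prefix
   of a concatenation of code words.  Every output symbol of h and of g
   depends on finitely many input symbols only, so both are continuous.
   Clearly h (sigma x) = sigma^|omega(x_0)| (h x).  By (ii), deleting the first
   symbol of the first L code words of y leaves a concatenation
   omega(j_1) ... omega(j_k), whence sigma^k (g (sigma y)) = sigma^L (g y). *)

Definition eq_upto (T : Type) (n : nat) (x y : nat -> T) : Prop :=
  forall j, (j < n)%N -> x j = y j.

Lemma eq_upto_le (T : Type) m n (x y : nat -> T) :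
  (m <= n)%N -> eq_upto n x y -> eq_upto m x y.
Proof. by move=> le_mn xy j lt_jm; apply: xy; apply: leq_trans le_mn. Qed.

Section FinitelyDetermined.
Local Open Scope classical_set_scope.
Variable N : nat.

Lemma nbhs_eq_upto (x : seqsp N) n : nbhs x [set z : seqsp N | eq_upto n z x].
Proof.
elim: n => [|n IHn]; first by apply: filterS filterT => z _ j.
have near_n : nbhs x [set z : seqsp N | z n = x n].
  exact: (@proj_continuous nat (fun=> alph N) n x [set x n] (discrete_set1 _)).
apply: filterS (filterI IHn near_n) => z [zx_lt zx_n] j; rewrite ltnS leq_eqVlt.
by case/orP => [/eqP -> //|]; apply: zx_lt.
Qed.

Definition finitely_determined (T : Type) (f : seqsp N -> T) : Prop :=
  forall x, exists n, forall z, eq_upto n z x -> f z = f x.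

Lemma finitely_determined_continuous (Y : discreteTopologicalType)
    (f : seqsp N -> Y) :
  finitely_determined f -> continuous f.
Proof.
move=> fdf x; apply/discrete_cvg; first by apply: fmap_filter; apply: nbhs_filter.
by have [n fxn] := fdf x; apply: filterS (nbhs_eq_upto x n) => z /fxn.
Qed.

Lemma finitely_determined_ptws_continuous (M : nat) (f : seqsp N -> seqsp M) :
  (forall k, finitely_determined (fun x => f x k)) -> continuous f.
Proof.
move=> fdf x; apply/pointwise_cvgP => [|k].
  by apply: fmap_filter; apply: nbhs_filter.
exact: (@finitely_determined_continuous (alph M) _ (fdf k)).
Qed.

End FinitelyDetermined.

Section Sequences.
Variable T : Type.
Implicit Types (x y : nat -> T) (s : seq T).

Lemma eq_upto_mkseq n x y : eq_upto n x y -> mkseq x n = mkseq y n.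
Proof.
move=> xy; apply: (@eq_from_nth _ (x 0%N)); rewrite !size_mkseq // => j lt_jn.
by rewrite !nth_mkseq // xy.
Qed.

Lemma take_mkseq x m n : (n <= m)%N -> take n (mkseq x m) = mkseq x n.
Proof. by move=> le_nm; rewrite /mkseq -map_take take_iota (minn_idPl le_nm). Qed.

Lemma mkseqD x m n :
  mkseq x (m + n) = mkseq x m ++ mkseq (fun k => x (m + k)%N) n.
Proof.
rewrite /mkseq iotaD map_cat add0n; congr (_ ++ _).
by rewrite -{1}[m]addn0 iotaDl -map_comp.
Qed.

Definition prepend s x : nat -> T :=
  fun n => if (n < size s)%N then nth (x 0%N) s n else x (n - size s)%N.

Lemma mkseq_prepend s x n : mkseq (prepend s x) (size s + n) = s ++ mkseq x n.
Proof.
rewrite mkseqD; congr (_ ++ _).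
  apply: (@eq_from_nth _ (x 0%N)); rewrite size_mkseq // => j lt_js.
  by rewrite nth_mkseq // /prepend lt_js.
by apply: eq_mkseq => k; rewrite /prepend ltnNge leq_addr /= addKn.
Qed.

End Sequences.

Lemma prefix_common (T : eqType) (a b c : seq T) :
  prefix a c -> prefix b c -> prefix a b || prefix b a.
Proof.
wlog le_ab : a b / (size a <= size b)%N.
  move=> wlog_ab ac bc; case: (leqP (size a) (size b)) => [le_ab|/ltnW le_ba].
    exact: wlog_ab.
  by rewrite orbC; apply: wlog_ab.
rewrite !prefixE => /eqP ac /eqP bc; apply/orP; left.
by rewrite -bc take_takel // ac.
Qed.

Section Shifts.
Variable K : nat.
Implicit Types (x : nat -> 'I_K) (s : seq 'I_K).

Lemma shiftn0 x : shiftn 0 x = x.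
Proof. by apply: funext => n; rewrite /shiftn addn0. Qed.

Lemma shiftn1 x : shiftn 1 x = shift x.
Proof. by apply: funext => n; rewrite /shiftn addn1. Qed.

Lemma shiftn_prepend s x : shiftn (size s) (prepend s x) = x.
Proof. by apply: funext => n; rewrite /shiftn /prepend ltnNge leq_addl /= addnK. Qed.

Lemma prepend_shiftn x n : prepend (mkseq x n) (shiftn n x) = x.
Proof.
apply: funext => k; rewrite /prepend /shiftn size_mkseq.
by case: ltnP => [lt_kn | /subnK ->] //; rewrite nth_mkseq.
Qed.

Lemma shift_prepend s x : (0 < size s)%N -> shift (prepend s x) = prepend (behead s) x.
Proof.
by case: s => // a s _; apply: funext => n; rewrite /shift /prepend /= ltnS subSS.
Qed.

End Shifts.

Section Coding.
Variables (N M : nat) (w : 'I_M -> seq 'I_N) (d : 'I_N) (u0 : 'I_M).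
Hypothesis w_neq0 : forall u, (0 < size (w u))%N.
Hypothesis w_prefix_free : forall u v, u != v -> ~~ prefix (w u) (w v).
Local Notation cw := (concat w).
Implicit Types (i : nat -> 'I_M) (s : seq 'I_M).

Lemma concat_cons u s : cw (u :: s) = w u ++ cw s. Proof. by []. Qed.

Lemma concat1 u : cw [:: u] = w u. Proof. by rewrite concat_cons cats0. Qed.

Lemma concat_cat s t : cw (s ++ t) = cw s ++ cw t.
Proof. by rewrite /concat map_cat flatten_cat. Qed.

Lemma concat_rcons s u : cw (rcons s u) = cw s ++ w u.
Proof. by rewrite -cats1 concat_cat concat1. Qed.

Lemma size_concat s : (size s <= size (cw s))%N.
Proof.
by elim: s => // u s IHs; rewrite concat_cons size_cat /=; have := w_neq0 u; lia.
Qed.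

(* The first n+1 code words suffice to reach index n, code words being nonempty. *)
Definition code_seq i : nat -> 'I_N := fun n => nth d (cw (mkseq i n.+1)) n.

Lemma size_concat_mkseq i n : (n <= size (cw (mkseq i n)))%N.
Proof. by have := size_concat (mkseq i n); rewrite size_mkseq. Qed.

Lemma code_seq_nth i m n : (n < size (cw (mkseq i m)))%N ->
  code_seq i n = nth d (cw (mkseq i m)) n.
Proof.
move=> lt_n_im; rewrite /code_seq; case: (leqP m n.+1) => [le_m_n1|/ltnW lt_n1_m].
  by rewrite -(subnKC le_m_n1) mkseqD concat_cat nth_cat lt_n_im.
rewrite -(subnKC lt_n1_m) mkseqD concat_cat nth_cat.
by rewrite (size_concat_mkseq i n.+1).
Qed.

Lemma mkseq_code_seq i m :
  mkseq (code_seq i) (size (cw (mkseq i m))) = cw (mkseq i m).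
Proof.
apply: (@eq_from_nth _ d); rewrite size_mkseq // => n lt_n_im.
by rewrite nth_mkseq // (code_seq_nth lt_n_im).
Qed.

Lemma code_seq_prepend s i : code_seq (prepend s i) = prepend (cw s) (code_seq i).
Proof.
apply: funext => n.
have lt_n : (n < size (cw (mkseq (prepend s i) (size s + n.+1))))%N.
  rewrite mkseq_prepend concat_cat size_cat.
  by have := size_concat_mkseq i n.+1; lia.
rewrite (code_seq_nth lt_n) mkseq_prepend concat_cat nth_cat /prepend.
case: ltnP => [lt_ns|le_sn]; first exact: set_nth_default.
rewrite (@code_seq_nth i n.+1) //.
by have := size_concat_mkseq i n.+1; lia.
Qed.

Lemma code_seq_shift i :
  code_seq (shift i) = shiftn (size (w (i 0%N))) (code_seq i).
Proof.
have def_i : i = prepend [:: i 0%N] (shift i)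
  by rewrite -shiftn1 -[[:: i 0%N]]/(mkseq i 1) prepend_shiftn.
have := congr1 (shiftn (size (w (i 0%N)))) (congr1 code_seq def_i).
by rewrite code_seq_prepend concat1 shiftn_prepend => ->.
Qed.

Lemma prefix_concat s t : prefix (cw s) (cw t) -> prefix s t.
Proof.
elim: s t => [|u s IHs] [|v t] //.
  by rewrite concat_cons prefixs0 -size_eq0 size_cat addn_eq0 eqn0Ngt w_neq0.
rewrite !concat_cons prefix_cons => st.
have uv : u = v.
  apply: contraTeq (prefix_common (catl_prefix st) (prefix_prefix _ _)) => n_uv.
  by rewrite negb_or !w_prefix_free // eq_sym.
by move: st; rewrite -uv prefix_catr // !eqxx => /IHs.
Qed.

Definition occurs_at (y : nat -> 'I_N) p (a : seq 'I_N) : bool :=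
  mkseq (fun t => y (p + t)%N) (size a) == a.

Lemma occurs_at_inj y p u v : occurs_at y p (w u) -> occurs_at y p (w v) -> u = v.
Proof.
pose z := mkseq (fun t => y (p + t)%N) (size (w u) + size (w v)).
have prefix_z a : occurs_at y p a -> (size a <= size (w u) + size (w v))%N ->
    prefix a z.
  by move=> /eqP ya le_a; rewrite prefixE take_mkseq // ya.
move=> yu yv; apply: contraTeq (prefix_common (prefix_z _ yu _) (prefix_z _ yv _)).
  by move=> n_uv; rewrite negb_or !w_prefix_free // eq_sym.
all: by rewrite ?leq_addr ?leq_addl.
Qed.

Definition max_size : nat := \max_u size (w u).

Lemma size_le_max u : (size (w u) <= max_size)%N.
Proof. exact: leq_bigmax. Qed.

(* u0 is a junk value, returned when no code word occurs at p. *)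
Definition decode_at (y : nat -> 'I_N) p : 'I_M :=
  odflt u0 [pick u | occurs_at y p (w u)].

Fixpoint decode_pos (y : nat -> 'I_N) k : nat :=
  if k is k.+1 then (decode_pos y k + size (w (decode_at y (decode_pos y k))))%N
  else 0%N.

Definition decode (y : nat -> 'I_N) : nat -> 'I_M :=
  fun k => decode_at y (decode_pos y k).

Lemma decode_atE y p u : occurs_at y p (w u) -> decode_at y p = u.
Proof.
move=> yu; rewrite /decode_at; case: pickP => [v yv|/(_ u)].
  exact: occurs_at_inj yv yu.
by rewrite yu.
Qed.

Lemma occurs_at_code_seq i k :
  occurs_at (code_seq i) (size (cw (mkseq i k))) (w (i k)).
Proof.
have := mkseq_code_seq i k.+1.
rewrite mkseqS concat_rcons size_cat mkseqD mkseq_code_seq => /eqP.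
by rewrite eqseq_cat // eqxx.
Qed.

Lemma decode_pos_code_seq i k : decode_pos (code_seq i) k = size (cw (mkseq i k)).
Proof.
elim: k => //= k ->; rewrite (decode_atE (occurs_at_code_seq i k)).
by rewrite mkseqS concat_rcons size_cat.
Qed.

Lemma decode_code_seq i : decode (code_seq i) = i.
Proof.
apply: funext => k; rewrite /decode decode_pos_code_seq.
exact: decode_atE (occurs_at_code_seq i k).
Qed.

Definition parsable (y : nat -> 'I_N) : Prop :=
  forall n, exists s, prefix (mkseq y n) (cw s).

Lemma parsable_occurs y p s :
  parsable y -> cw s = mkseq y p -> exists u, occurs_at y p (w u).
Proof.
move=> y_parse ys; have [t] := y_parse (p + max_size)%N.
rewrite mkseqD -ys => ys_t.
have [t' def_t] := prefixP (prefix_concat (catl_prefix ys_t)).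
rewrite def_t concat_cat prefix_catr // eqxx /= in ys_t.
case: t' {def_t} ys_t => [|u t'] ys_t.
  move: ys_t; rewrite prefixs0 -size_eq0 size_mkseq eqn0Ngt.
  by rewrite (leq_trans (w_neq0 u0) (size_le_max u0)).
exists u; move: ys_t; rewrite prefixE size_mkseq concat_cons => /eqP window_def.
rewrite /occurs_at -(take_mkseq _ (size_le_max u)) -window_def.
by rewrite take_takel ?size_le_max // take_size_cat.
Qed.

Lemma concat_decode y k :
  parsable y -> cw (mkseq (decode y) k) = mkseq y (decode_pos y k).
Proof.
move=> y_parse; elim: k => // k IHk.
have [u yu] := parsable_occurs y_parse IHk.
rewrite mkseqS concat_rcons IHk /decode /= (decode_atE yu) mkseqD.
by rewrite (eqP yu).
Qed.

Lemma decode_pos_ge y k : (k <= decode_pos y k)%N.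
Proof. by elim: k => //= k IHk; have := w_neq0 (decode_at y (decode_pos y k)); lia. Qed.

Lemma decode_pos_le y k : (decode_pos y k <= k * max_size)%N.
Proof.
elim: k => //= k IHk; have := size_le_max (decode_at y (decode_pos y k)).
by rewrite mulSn; lia.
Qed.

Lemma code_seq_decode y : parsable y -> code_seq (decode y) = y.
Proof.
move=> y_parse; apply: funext => n.
rewrite (code_seq_nth (size_concat_mkseq _ n.+1)) concat_decode // nth_mkseq //.
exact: decode_pos_ge.
Qed.

Lemma decode_at_eq_upto y y' p :
  eq_upto max_size (fun t => y (p + t)%N) (fun t => y' (p + t)%N) ->
  decode_at y p = decode_at y' p.
Proof.
move=> yy'; rewrite /decode_at; congr odflt; apply: eq_pick => u.
by rewrite /occurs_at (eq_upto_mkseq (eq_upto_le (size_le_max u) yy')).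
Qed.

Lemma decode_pos_eq_upto y y' k :
  eq_upto (k * max_size) y y' -> decode_pos y k = decode_pos y' k.
Proof.
elim: k => //= k IHk yy'.
have -> : decode_pos y k = decode_pos y' k.
  by apply/IHk/(eq_upto_le _ yy'); rewrite mulSn leq_addl.
rewrite (@decode_at_eq_upto y y') // => t lt_t; apply: yy'.
by have := decode_pos_le y' k; rewrite mulSn; lia.
Qed.

Lemma decode_eq_upto y y' k :
  eq_upto (k.+1 * max_size) y y' -> decode y k = decode y' k.
Proof.
move=> yy'; rewrite /decode (@decode_pos_eq_upto y y' k); last first.
  by apply: eq_upto_le yy'; rewrite mulSn leq_addl.
apply: decode_at_eq_upto => t lt_t; apply: yy'.
by have := decode_pos_le y' k; rewrite mulSn; lia.
Qed.

End Coding.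

Definition adjacent (K : nat) (B : 'M[int]_K) : rel 'I_K := fun a b => B a b == 1%R.

Section MarkovShifts.
Variable K : nat.
Implicit Types (B : 'M[int]_K) (y : nat -> 'I_K).

Lemma X_sorted B y : X_ B y <-> forall n, sorted (adjacent B) (mkseq y n).
Proof.
split=> [yB n | y_sorted n].
  apply/(sortedP (y 0%N)) => j; rewrite size_mkseq => lt_j1n.
  by rewrite !nth_mkseq ?(ltnW lt_j1n) //; apply/eqP.
move/(sortedP (y 0%N)): (y_sorted n.+2) => /(_ n).
by rewrite size_mkseq !nth_mkseq // => /(_ (ltnSn _))/eqP.
Qed.

Lemma admissible_mkseq B y n : X_ B y -> admissible B (mkseq y n).
Proof. by right; exists y; rewrite size_mkseq. Qed.

Lemma admissible_sorted B a : admissible B a -> sorted (adjacent B) a.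
Proof. by case=> [-> // | [y [yB ->]]]; apply: (X_sorted B y).1. Qed.

End MarkovShifts.

Section CodeMatrix.
Variables (N M : nat) (A : 'M[int]_N) (w : 'I_M -> seq 'I_N) (d : 'I_N).
Hypothesis w_neq0 : forall u, (0 < size (w u))%N.
Hypothesis w_sorted : forall u, sorted (adjacent A) (w u).

Lemma sorted_code_mx s :
  sorted (adjacent (code_mx A w)) s = sorted (adjacent A) (concat w s).
Proof.
elim: s => // u s IHs; case: s IHs => [|v s] IHs; first by rewrite concat1 w_sorted.
rewrite [LHS]/= -/(sorted _ (v :: s)) IHs !concat_cons /adjacent mxE.
have := w_sorted u; have := w_neq0 u; have := w_neq0 v.
case: (w u) => [|a r] //; case: (w v) => [|b r'] //= _ _ sorted_ar.
by rewrite [in RHS]cat_path sorted_ar.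
Qed.

Lemma X_code_mx i : X_ (code_mx A w) i <-> X_ A (code_seq w d i).
Proof.
rewrite !X_sorted; split=> sorted_i n; last first.
  by rewrite sorted_code_mx -(mkseq_code_seq d w_neq0) sorted_i.
rewrite -(take_mkseq _ (size_concat_mkseq w_neq0 i n)) (mkseq_code_seq d w_neq0).
by apply: take_sorted; rewrite -sorted_code_mx.
Qed.

End CodeMatrix.

Section RightMarkovCode.
Variables (N M : nat) (A : 'M[int]_N) (w : 'I_M -> seq 'I_N).
Hypothesis w_code : right_Markov_code A w.

Lemma code_word_neq0 u : (0 < size (w u))%N.
Proof.
case: w_code => [[[_ _ _ unique_fact] _] _ _ _].
rewrite lt0n size_eq0; apply/eqP => wu0.
by have := unique_fact [:: u] [::]; rewrite /concat /= wu0 => /(_ erefl).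
Qed.

Lemma code_prefix_free u v : u != v -> ~~ prefix (w u) (w v).
Proof. by case: w_code => [[_ w_prefix_free] _ _ _]; apply: w_prefix_free. Qed.

Lemma code_word_sorted u : sorted (adjacent A) (w u).
Proof. by case: w_code => [[[_ _ w_adm _] _] _ _ _]; apply: admissible_sorted. Qed.

Lemma X_parsable y : X_ A y -> parsable w y.
Proof.
case: w_code => _ extend _ _ yA n.
have [eta [_ [_ [s [def_s _]]]]] := extend _ (admissible_mkseq n yA).
by exists s; rewrite -def_s prefix_prefix.
Qed.

Lemma decode_shift_orbit (d : 'I_N) (u0 : 'I_M) :
  exists (L : nat) (k : seqsp N -> nat), {within X_ A, continuous k}%classic /\
    forall y, X_ A y -> shiftn (k y) (decode w u0 (shift y)) = shiftn L (decode w u0 y).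
Proof.
case: w_code => _ _ [L [L_gt0 shift_concat]] _.
have tl_ex s : exists t, size s = L -> admissible A (concat w s) ->
    wshift (concat w s) = concat w t.
  case: (pselect (size s = L /\ admissible A (concat w s))) => [[sL s_adm]|s_bad].
    by have [t ->] := shift_concat s sL s_adm; exists t.
  by exists [::] => sL s_adm; exfalso; apply: s_bad.
have [tl tlP] := choice tl_ex.
exists L, (fun y => size (tl (mkseq (decode w u0 y) L))); split.
  apply/continuous_subspaceT/finitely_determined_continuous => y.
  exists (L * max_size w)%N => z zy; congr (size (tl _)).
  apply: eq_upto_mkseq => k lt_kL; apply: decode_eq_upto.
  by apply: eq_upto_le zy; apply: leq_mul.
move=> y yA; set i := decode w u0 y; set s := mkseq i L.
have code_i : code_seq w d i = y.
  exact: (code_seq_decode d u0 code_word_neq0 code_prefix_free (X_parsable yA)).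
have s_adm : admissible A (concat w s).
  by rewrite -(mkseq_code_seq d code_word_neq0) code_i; apply: admissible_mkseq.
have shift_y : shift y = code_seq w d (prepend (tl s) (shiftn L i)).
  have s_neq0 : (0 < size (concat w s))%N.
    exact: leq_trans L_gt0 (size_concat_mkseq code_word_neq0 i L).
  rewrite -code_i -{1}(prepend_shiftn i L) !(code_seq_prepend d code_word_neq0).
  by rewrite -/s shift_prepend // -(tlP s (size_mkseq _ _) s_adm).
by rewrite shift_y (decode_code_seq d u0 code_word_neq0 code_prefix_free) shiftn_prepend.
Qed.

End RightMarkovCode.

Local Open Scope ring_scope.

Theorem mainTheorem2 (N : nat) (A : 'M[int]_N) (M : nat)
  (omega : 'I_M -> seq 'I_N) :
  zero_one_mx A -> irreducible_mx A -> ~ is_perm_mx A ->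
  right_Markov_code A omega ->
  coe (code_mx A omega) A.
Proof.
move=> _ _ _ omega_code.
have w_neq0 := code_word_neq0 omega_code.
have w_pf := code_prefix_free omega_code.
have w_sorted := code_word_sorted omega_code.
have [u0 _] : exists u0 : 'I_M, True.
  by case: omega_code => [[[M_gt0 _ _ _] _] _ _ _]; exists (Ordinal M_gt0).
have [d _] : exists d : 'I_N, True by case: (omega u0) (w_neq0 u0) => // a _ _; exists a.
have [L [k2 [k2_cont k2_orbit]]] := decode_shift_orbit omega_code d u0.
have code_decode y : X_ A y -> code_seq omega d (decode omega u0 y) = y.
  by move=> yA; apply: (code_seq_decode d u0 w_neq0 w_pf (X_parsable omega_code yA)).
exists (code_seq omega d), (decode omega u0), (fun=> 0%N),
  (fun i => size (omega (i 0%N))), k2, (fun=> L).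
split.
- split=> [i /(X_code_mx d w_neq0 w_sorted) //|y yA].
  by apply/(X_code_mx d w_neq0 w_sorted); rewrite code_decode.
- by split=> [i _|y /code_decode]; first exact: decode_code_seq.
- split; apply/continuous_subspaceT/finitely_determined_ptws_continuous => k x.
    by exists k.+1 => z zx; rewrite /code_seq (eq_upto_mkseq zx).
  by exists (k.+1 * max_size omega)%N => z zx; apply: decode_eq_upto.
- split; [split | split; first exact: k2_cont];
    apply/continuous_subspaceT; try exact: cst_continuous.
  by apply: finitely_determined_continuous => x; exists 1%N => z zx; rewrite zx.
- by split=> [i _|]; [rewrite shiftn0 code_seq_shift | exact: k2_orbit].
Qed.
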